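(* Assume $u\circ\Phi_C\in\mathcal{L}^1(\Omega,\mathcal{S},\pi)$ for all $C\in\mathcal{C}$ and all $u\in\mathcal{U}_{\mathcal{P}}$. Let $T_1,\dots,T_s$ be i.i.d. copies of $T$ and let $0\le\varepsilon_1\le\varepsilon_2\le 1$. Then (i) $\mathrm{gsd}(\mathcal{C})\subseteq\mathrm{par}(\Phi)$; (ii) for every $\omega\in\Omega$, $$\mathrm{egsd}^{\varepsilon_2}_s(\mathcal{C})(\omega)\subseteq\mathrm{egsd}^{\varepsilon_1}_s(\mathcal{C})(\omega)\subseteq\mathrm{par}\bigl(\Phi,\{T_1(\omega),\dots,T_s(\omega)\}\bigr).$$
   Context: Setting. $\mathcal{C}$ is a finite set (of classifiers), $\mathcal{D}$ a nonempty set (of data sets), $n\ge 1$, $0\le z\le n$, and $\Phi=(\phi_1,\dots,\phi_n):\mathcal{C}\times\mathcal{D}\to[0,1]^n$; the first $z$ coordinates are regarded as cardinal, the remaining ones as ordinal. Preference systems. A preference system is a triple $\mathcal{A}=[A,R_1,R_2]$ with $A\neq\emptyset$, $R_1\subseteq A\times A$ a preorder (reflexive, transitive) and $R_2\subseteq R_1\times R_1$ a preorder on $R_1$. For a preorder $R$, its strict part is $P_R=\{(a,b):(a,b)\in R,(b,a)\notin R\}$ and its indifference part is $I_R=\{(a,b):(a,b)\in R,(b,a)\in R\}$. A representation of $\mathcal{A}$ is a map $u:A\to\mathbb{R}$ such that for all $a,b,c,d\in A$: (i) $(a,b)\in R_1\Rightarrow u(a)\ge u(b)$, with equality iff $(a,b)\in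 I_{R_1}$; (ii) $((a,b),(c,d))\in R_2\Rightarrow u(a)-u(b)\ge u(c)-u(d)$, with equality iff $((a,b),(c,d))\in I_{R_2}$. $\mathcal{U}_{\mathcal{A}}$ denotes the set of all representations; $\mathcal{A}$ is consistent if $\mathcal{U}_{\mathcal{A}}\neq\emptyset$. The restriction of $\mathcal{A}$ to $A'\subseteq A$ is $[A',R_1',R_2']$ with $R_1'=R_1\cap(A'\times A')$ and $R_2'=R_2\cap(R_1'\times R_1')$. The system $\mathcal{P}=[[0,1]^n,R_1^*,R_2^*]$: $R_1^*=\{(x,y): x_j\ge y_j\ \forall j\le n\}$ and $R_2^*=\{((x,y),(x',y')): x_j-y_j\ge x_j'-y_j'\ \forall j\le z,\ \ x_j\ge x_j'\ge y_j'\ge y_j\ \forall j>z\}$ (with $(x,y),(x',y')\in R_1^*$). $\mathcal{P}_\Phi$ is the restriction of $\mathcal{P}$ to $\Phi(\mathcal{C}\times\mathcal{D})$. GSD order. $(\Omega,\mathcal{S},\pi)$ is a probability space, $T:\Omega\to\mathcal{D}$ a random variable, and $\Phi_C:=\Phi(C,T(\cdot))$ for $C\in\mathcal{C}$. For $C,C'\in\mathcal{C}$, $C\succsim C'$ iff $\mathbb{E}_\pi(u\circ\Phi_C)\ge\mathbb{E}_\pi(u\circ\Phi_{C'})$ for all $u\in\mathcal{U}_{\mathcal{P}_\Phi}$; $\succ$ is the strict part of $\succsim$. The GSD-front is $\mathrm{gsd}(\mathcal{C})=\{C\in\mathcal{C}:\nexists C'\in\mathcal{C}\text{ with } C'\succ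 C\}$. Empirical GSD-front. For $s\in\mathbb{N}$ and i.i.d. copies $T_1,\dots,T_s$ of $T$, let $Z_s=\{\Phi(C,T_i): i\le s, C\in\mathcal{C}\}$, let $\mathcal{W}_s$ be the restriction of $\mathcal{P}$ to $Z_s$, and for $M\subseteq[0,1]^n$ let $\hat\pi_C(M)=\frac1s|\{i\le s:\Phi(C,T_i)\in M\}|$. Define $d_s(C,C')=\inf_{u\in\mathcal{U}_{\mathcal{W}_s}}\sum_{z\in Z_s}u(z)\bigl(\hat\pi_C(\{z\})-\hat\pi_{C'}(\{z\})\bigr)$. For $\varepsilon\in[0,1]$, the $\varepsilon$-empirical GSD-front is $\mathrm{egsd}^{\varepsilon}_s(\mathcal{C})=\{C\in\mathcal{C}:\nexists C'\in\mathcal{C}\text{ with } d_s(C',C)\ge-\varepsilon\text{ and } d_s(C,C')<0\}$ (a random set, evaluated pointwise in $\omega$). Pareto front. Let $\gtrdot$ be the strict part of the componentwise order $\ge$ on $\mathbb{R}^n$ (i.e. $x\gtrdot y$ iff $x_j\ge y_j$ for all $j$ and $x\ne y$). For $\tilde{\mathcal{D}}\subseteq\mathcal{D}$, $\mathrm{par}(\Phi,\tilde{\mathcal{D}})=\{C\in\mathcal{C}:\nexists C'\in\mathcal{C}\text{ such that }\Phi(C',D)\gtrdot\Phi(C,D)\text{ for all }D\in\tilde{\mathcal{D}}\}$, and $\mathrm{par}(\Phi):=\mathrm{par}(\Phi,\mathcal{D})$. *)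

From HB Require Import structures.
From mathcomp Require Import all_boot all_order all_algebra.
From mathcomp Require Import all_classical all_reals all_analysis.
Set Implicit Arguments. Unset Strict Implicit. Unset Printing Implicit Defensive.
Import Order.TTheory GRing.Theory Num.Theory.
Local Open Scope classical_set_scope.
Local Open Scope ring_scope.

Section PrefSystems.
Variable R : realType.

(* Representation of the restriction of a preference system [V, R1, R2]
   to A : set V (R2 : a relation on pairs of R1-related pairs, given
   curried as R2 a b c d  <->  ((a,b),(c,d)) in R2).  Maps are total V -> R;
   only their values on A matter. *)
Definition is_representation {V : Type} (A : set V) (R1 : V -> V -> Prop)
  (R2 : V -> V -> V -> V -> Prop) (u : V -> R) : Prop :=
  (forall a b, A a -> A b -> R1 a b -> u b <= u a /\ (u a = u b <-> R1 b a)) /\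
  (forall a b c d, A a -> A b -> A c -> A d -> R1 a b -> R1 c d -> R2 a b c d ->
     u c - u d <= u a - u b /\ (u a - u b = u c - u d <-> R2 c d a b)).

Variable n : nat.
Local Notation vec := {ffun 'I_n -> R}.

Definition unit_cube : set vec := [set x | forall j, 0 <= x j <= 1].

Definition R1star (x y : vec) : Prop := forall j, y j <= x j.

(* R_2^* ; coordinates j < z are cardinal, j >= z ordinal (0-indexed) *)
Definition R2star (z : nat) (x y x' y' : vec) : Prop :=
  R1star x y /\ R1star x' y' /\
  (forall j : 'I_n, (j < z)%N -> x' j - y' j <= x j - y j) /\
  (forall j : 'I_n, (z <= j)%N -> x' j <= x j /\ y' j <= x' j /\ y j <= y' j).

Definition strict_dom (x y : vec) : Prop := R1star x y /\ x <> y.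

Section Classifiers.
Variables (Cty : finType) (D : Type) (Phi : Cty -> D -> vec).

Definition Phi_image : set vec := [set x | exists c t, Phi c t = x].

Definition par (Dt : set D) : set Cty :=
  [set c | ~ exists c' : Cty, forall t, Dt t -> strict_dom (Phi c' t) (Phi c t)].

Section GSD.
Variables (dO : measure_display) (Omega : measurableType dO)
  (P : probability Omega R) (z : nat) (T : Omega -> D).

Definition expect_u (u : vec -> R) (c : Cty) : \bar R :=
  (\int[P]_w (u (Phi c (T w)))%:E)%E.

Definition gsd_ge (c c' : Cty) : Prop :=
  forall u, is_representation Phi_image R1star (R2star z) u ->
    (expect_u u c' <= expect_u u c)%E.

Definition gsd_gt (c c' : Cty) : Prop := gsd_ge c c' /\ ~ gsd_ge c' c.

Definition gsd_front : set Cty := [set c | ~ exists c', gsd_gt c' c].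
End GSD.

Section Empirical.
Variables (Omega : Type) (z s : nat) (Ts : 'I_s -> Omega -> D).

Definition Zs (w : Omega) : seq vec :=
  undup [seq Phi c (Ts i w) | i <- enum 'I_s, c <- enum Cty].

Definition pihat (w : Omega) (c : Cty) (x : vec) : R :=
  #|[set i : 'I_s | Phi c (Ts i w) == x]|%:R / s%:R.

Definition d_s (w : Omega) (c c' : Cty) : \bar R :=
  ereal_inf [set (\sum_(x <- Zs w) u x * (pihat w c x - pihat w c' x))%:E
            | u in [set u | is_representation [set x | x \in Zs w] R1star (R2star z) u]].

Definition egsd (eps : R) (w : Omega) : set Cty :=
  [set c | ~ exists c', (- eps%:E <= d_s w c' c)%E /\ (d_s w c c' < 0)%E].
End Empirical.
End Classifiers.

(* Ts_1..Ts_s are i.i.d. copies of T: measurable, identically distributed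
   with T, and mutually independent (product rule; sub-families are covered
   by taking A i = setT). *)
Definition iid_copies {dO dD : measure_display} {Omega : measurableType dO}
  {D : measurableType dD} (P : probability Omega R) (T : Omega -> D) (s : nat)
  (Ts : 'I_s -> Omega -> D) : Prop :=
  (forall i, measurable_fun setT (Ts i)) /\
  (forall i (A : set D), measurable A -> P (Ts i @^-1` A) = P (T @^-1` A)) /\
  (forall A : 'I_s -> set D, (forall i, measurable (A i)) ->
     P (\bigcap_(i in [set: 'I_s]) (Ts i @^-1` A i)) =
     (\prod_(i < s) P (Ts i @^-1` A i))%E).
End PrefSystems.

(* If c' strictly Pareto-dominates c on every data set, then for every
   representation u the function u o Phi_c' dominates u o Phi_c pointwise, so
   c' is GSD-preferred to c; the coordinate sum is itself a representation
   (of any restriction of the preference system), and under it the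
   expectation gap is the integral of an everywhere positive function, so c
   is not GSD-preferred to c'.  The empirical statement is the same argument
   with the empirical measures: dominance on the sample gives
   d_s(c', c) >= 0 >= -eps, and the coordinate sum gives d_s(c, c') < 0.
   Monotonicity in eps is immediate, since a larger eps weakens the condition
   under which c is excluded from the front. *)
From HB Require Import structures.
From mathcomp Require Import all_boot all_order all_algebra.
From mathcomp Require Import all_classical all_reals all_analysis.
From mathcomp Require Import measurable_realfun.
From mathcomp Require Import lra.
Import Order.TTheory GRing.Theory Num.Theory.
Local Open Scope classical_set_scope.
Local Open Scope ring_scope.

Section integral_pointwise.
Local Open Scope ereal_scope.
Context d (T : measurableType d) (R : realType).
Variable mu : {measure set T -> \bar R}.

(* No measurability is needed: both the positive and negative parts of the
   integral are suprema over simple functions, and [f <= g] enlarges the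
   first set and shrinks the second. *)
Lemma le_integral_pointwise (D : set T) (f g : T -> \bar R) :
  (forall x, f x <= g x) -> \int[mu]_(x in D) f x <= \int[mu]_(x in D) g x.
Proof.
move=> fg; have fgD x : (f \_ D) x <= (g \_ D) x by rewrite /patch; case: ifP.
rewrite /integral /=; apply: leeB; apply: ereal_sup_le => _ [h /= hf <-];
  exists h => //= x; apply: le_trans (hf x) _.
- exact: (@funepos_le _ _ setT) (fun x _ => fgD x) x (in_setT x).
- exact: (@funeneg_le _ _ setT) (fun x _ => fgD x) x (in_setT x).
Qed.

Lemma integral_gt0_pointwise (f : T -> \bar R) :
  mu setT != 0 -> measurable_fun setT f -> (forall x, 0 < f x) ->
  0 < \int[mu]_x f x.
Proof.
move=> mu0 mf f_gt0; rewrite lt0e integral_ge0 ?andbT; last by move=> x _; exact: ltW.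
apply: contra mu0 => /eqP intf0.
have : \int[mu]_x `|f x| = 0.
  by rewrite -intf0; apply: eq_integral => x _; rewrite gee0_abs // ltW.
case/(ae_eq_integral_abs mu measurableT mf) => N [_ muN0 fN].
have -> : setT = N.
  apply/seteqP; split => // x _; apply: fN => /= fx0.
  by have := f_gt0 x; rewrite fx0 // ltxx.
by apply/eqP; exact: muN0.
Qed.

End integral_pointwise.

Lemma ler_sum_eq {R : numDomainType} {I : finType} {F G : I -> R} :
  (forall i, F i <= G i) -> \sum_i F i = \sum_i G i -> F =1 G.
Proof.
move=> FG sumFG i.
have /leif_sum[_] : forall j, true -> F j <= G j ?= iff (F j == G j).
  by move=> j _; exact/leif_eq/FG.
by rewrite sumFG eqxx => /esym/forall_inP/(_ i isT)/eqP.
Qed.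

Section coordinate_sum.
Context {R : realType} {n : nat}.
Local Notation vec := {ffun 'I_n -> R}.

Definition coord_sum (x : vec) : R := \sum_j x j.

Lemma coord_sum_le {x y : vec} : R1star x y -> coord_sum y <= coord_sum x.
Proof. by move=> xy; apply: ler_sum => j _. Qed.

Lemma coord_sum_eq {x y : vec} :
  R1star x y -> coord_sum x = coord_sum y -> x = y.
Proof. by move=> xy /esym /(ler_sum_eq xy) yx; apply/ffunP => j; rewrite yx. Qed.

Lemma coord_sum_lt_strict_dom {x y : vec} :
  strict_dom x y -> coord_sum y < coord_sum x.
Proof.
case=> xy x_neq_y; rewrite lt_neqAle coord_sum_le // andbT.
by apply: contra_notN x_neq_y => /eqP/esym; exact: coord_sum_eq.
Qed.

Lemma R2star_diff_le {z : nat} {a b c d : vec} :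
  R2star z a b c d -> forall j, c j - d j <= a j - b j.
Proof.
case=> _ [_ [card ord]] j; case: (ltnP j z) => jz; first exact: card.
by have [? [? ?]] := ord j jz; lra.
Qed.

(* In the ordinal coordinates, nested intervals of equal length coincide. *)
Lemma R2star_sym {z : nat} {a b c d : vec} : R1star a b -> R1star c d ->
  R2star z a b c d -> (forall j, c j - d j = a j - b j) -> R2star z c d a b.
Proof.
move=> ab cd [_ [_ [_ ord]]] diff_eq; do 2!split => //; split.
  by move=> j _; rewrite diff_eq.
move=> j jz; have [? [? ?]] := ord j jz; have := diff_eq j; have := ab j.
by have := cd j; lra.
Qed.

Lemma coord_sum_representation (z : nat) (A : set vec) :
  is_representation A (@R1star R n) (@R2star R n z) coord_sum.
Proof.
split=> [a b _ _ ab | a b c d _ _ _ _ ab cd abcd].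
  split; first exact: coord_sum_le.
  split=> [sum_eq | ba]; first by rewrite (coord_sum_eq ab sum_eq).
  by apply/le_anti; rewrite !coord_sum_le.
have diff_le := R2star_diff_le abcd.
rewrite /coord_sum -!sumrB; split; first by apply: ler_sum => j _.
split=> [sum_eq | cdab].
  by apply: R2star_sym => // j; rewrite (ler_sum_eq diff_le (esym sum_eq)).
apply/le_anti/andP; split; apply: ler_sum => j _;
  [exact: (R2star_diff_le cdab) | exact: diff_le].
Qed.

End coordinate_sum.

Lemma sum_mul_card_preimage (R : pzSemiRingType) (V : eqType) (I : finType)
  (L : seq V) (f : I -> V) (u : V -> R) : uniq L -> (forall i, f i \in L) ->
  \sum_(x <- L) u x * #|[set i | f i == x]|%:R = \sum_i u (f i).
Proof.
move=> uniqL fL.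
have card_preimage x : #|[set i | f i == x]| = #|[pred i | f i == x]|.
  by apply: eq_card => i; apply/idP/idP => [/set_mem | /mem_set].
under eq_bigr => x _ do rewrite card_preimage -sum1_card natr_sum mulr_sumr.
rewrite (exchange_big_dep xpredT) //=; apply: eq_bigr => i _.
rewrite -big_filter (@eq_filter _ _ (pred1 (f i))) => [|x]; last by rewrite /= eq_sym.
by rewrite filter_pred1_uniq // big_seq1 mulr1.
Qed.

Section empirical_gsd.
Variables (R : realType) (n : nat) (Cty : finType) (D : Type).
Variables (Phi : Cty -> D -> {ffun 'I_n -> R}) (Omega : Type) (z s : nat).
Variables (Ts : 'I_s -> Omega -> D) (w : Omega).

Lemma mem_Zs c i : Phi c (Ts i w) \in Zs Phi Ts w.
Proof.
by rewrite mem_undup; apply: (allpairs_f (fun i c => Phi c (Ts i w))); rewrite mem_enum.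
Qed.

Lemma empirical_gapE (u : {ffun 'I_n -> R} -> R) (c c' : Cty) :
  \sum_(x <- Zs Phi Ts w) u x * (pihat Phi Ts w c x - pihat Phi Ts w c' x) =
  (\sum_i (u (Phi c (Ts i w)) - u (Phi c' (Ts i w)))) / s%:R.
Proof.
under eq_bigr do rewrite mulrBr !mulrA.
rewrite sumrB -!mulr_suml -mulrBl sumrB.
by rewrite !sum_mul_card_preimage ?undup_uniq // => i; exact: mem_Zs.
Qed.

Lemma d_s_ge0 (c c' : Cty) :
  (forall i, R1star (Phi c (Ts i w)) (Phi c' (Ts i w))) ->
  (0 <= d_s Phi z Ts w c c')%E.
Proof.
move=> dom; apply/ereal_infP => _ [u [u_mono _] <-].
rewrite lee_fin empirical_gapE divr_ge0 // sumr_ge0 // => i _.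
by rewrite subr_ge0; apply: (u_mono _ _ (mem_Zs c i) (mem_Zs c' i) (dom i)).1.
Qed.

Lemma d_s_lt0 (c c' : Cty) : (0 < s)%N ->
  (forall i, strict_dom (Phi c' (Ts i w)) (Phi c (Ts i w))) ->
  (d_s Phi z Ts w c c' < 0)%E.
Proof.
move=> s_gt0 dom; apply: le_lt_trans (ereal_inf_lbound _) _.
  by exists coord_sum => //; exact: coord_sum_representation.
rewrite lte_fin empirical_gapE pmulr_llt0 ?invr_gt0 ?ltr0n // sumrB subr_lt0.
apply: ltr_sum => [|i _]; last exact/coord_sum_lt_strict_dom.
by apply/hasP; exists (Ordinal s_gt0); rewrite ?mem_index_enum.
Qed.

Lemma egsd_antimono (eps1 eps2 : R) :
  eps1 <= eps2 -> egsd Phi z Ts eps2 w `<=` egsd Phi z Ts eps1 w.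
Proof.
move=> eps12 c c_front [c' [ge_eps gap]]; apply: c_front; exists c'; split => //.
by apply: le_trans ge_eps; rewrite leeN2 lee_fin.
Qed.

Lemma egsd_sub_par (eps : R) : 0 <= eps -> (0 < s)%N ->
  egsd Phi z Ts eps w `<=` par Phi [set Ts i w | i in [set: 'I_s]].
Proof.
move=> eps_ge0 s_gt0 c c_front [c' dom]; apply: c_front; exists c'.
have {}dom i : strict_dom (Phi c' (Ts i w)) (Phi c (Ts i w)) by apply: dom; exists i.
split; last exact: d_s_lt0.
apply: le_trans _ (d_s_ge0 _ _ (fun i => (dom i).1)).
by rewrite leeNl oppe0 lee_fin.
Qed.

End empirical_gsd.

Section population_gsd.
Variables (R : realType) (n : nat) (Cty : finType) (D : Type).
Variables (Phi : Cty -> D -> {ffun 'I_n -> R}).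
Variables (dO : measure_display) (Omega : measurableType dO).
Variables (P : probability Omega R) (z : nat) (T : Omega -> D).

Lemma gsd_ge_R1star (c c' : Cty) :
  (forall w, R1star (Phi c (T w)) (Phi c' (T w))) -> gsd_ge Phi P z T c c'.
Proof.
move=> dom u [u_mono _]; apply: le_integral_pointwise => w; rewrite lee_fin.
have image_Phi c0 : Phi_image Phi (Phi c0 (T w)) by exists c0, (T w).
exact: (u_mono _ _ (image_Phi c) (image_Phi c') (dom w)).1.
Qed.

Lemma not_gsd_ge_strict_dom (c c' : Cty) :
  P.-integrable setT (fun w => (coord_sum (Phi c (T w)))%:E) ->
  P.-integrable setT (fun w => (coord_sum (Phi c' (T w)))%:E) ->
  (forall w, strict_dom (Phi c' (T w)) (Phi c (T w))) -> ~ gsd_ge Phi P z T c c'.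
Proof.
move=> int_c int_c' dom /(_ _ (coord_sum_representation z _)).
rewrite /expect_u -sube_le0 -(integralB_EFin measurableT int_c' int_c) leNgt.
apply/negP/negPn; apply: integral_gt0_pointwise.
- by rewrite /= probability_setT.
- exact: emeasurable_funB (measurable_int _ int_c') (measurable_int _ int_c).
- by move=> w; rewrite -EFinB lte_fin subr_gt0; exact: coord_sum_lt_strict_dom.
Qed.

Lemma gsd_front_sub_par :
  (forall c, P.-integrable setT (fun w => (coord_sum (Phi c (T w)))%:E)) ->
  gsd_front Phi P z T `<=` par Phi setT.
Proof.
move=> int_sum c c_front [c' dom]; apply: c_front; exists c'; split.
  by apply: gsd_ge_R1star => w; exact: (dom _ I).1.
by apply: not_gsd_ge_strict_dom => // w; exact: dom.
Qed.

End population_gsd.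

Theorem theorem2 (R : realType) (Cty : finType)
  (dD : measure_display) (D : measurableType dD)
  (n z : nat) (Phi : Cty -> D -> {ffun 'I_n -> R})
  (dO : measure_display) (Omega : measurableType dO) (P : probability Omega R)
  (T : Omega -> D) (s : nat) (Ts : 'I_s -> Omega -> D) (eps1 eps2 : R) :
  inhabited D ->
  (z <= n)%N ->
  (forall c t j, 0 <= Phi c t j <= 1) ->
  measurable_fun setT T ->
  (forall (c : Cty) (u : {ffun 'I_n -> R} -> R),
     is_representation (@unit_cube R n) (@R1star R n) (@R2star R n z) u ->
     P.-integrable setT (fun w => (u (Phi c (T w)))%:E)) ->
  (0 < s)%N ->
  iid_copies P T Ts ->
  0 <= eps1 -> eps1 <= eps2 -> eps2 <= 1 ->
  gsd_front Phi P z T `<=` par Phi setT /\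
  (forall w : Omega,
     egsd Phi z Ts eps2 w `<=` egsd Phi z Ts eps1 w /\
     egsd Phi z Ts eps1 w `<=` par Phi [set Ts i w | i in [set: 'I_s]]).
Proof.
move=> _ _ _ _ integrable_rep s_gt0 _ eps1_ge0 eps12 _; split.
  apply: gsd_front_sub_par => c.
  exact/integrable_rep/coord_sum_representation.
move=> w; split; first exact: egsd_antimono.
exact: egsd_sub_par.
Qed.
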